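(* Let $n\ge d$, let $\mathbf X\in\mathbb R^{n\times d}$ have full column rank, let $1\le k<d$, let $\mathbf y\in\mathbb R^n$ with $\hat\sigma_{1:k}:=\|(\mathbf I-\mathbf P_{-1:k})\mathbf y\|>0$, and fix $\lambda>0$. With $\hat{\boldsymbol\beta}^\lambda_{-1:k}(\cdot)$, $\mathcal A(\cdot)$, $\mathbf P_{\mathcal A(\cdot)}$ and $g_r$ as in the context, let $\mathbf b^*\in\mathbb R^k\setminus\{\mathbf 0\}$ be such that $\mathcal A(\cdot)$ is constant on a neighborhood of $\mathbf b^*$. Then there is a neighborhood $N$ of $\mathbf b^*$ such that for all $\mathbf b\in N$ with $\|\mathbf b\|=\|\mathbf b^*\|$, $$g_{\|\mathbf b^*\|}(\mathbf b)=\nabla g_{\|\mathbf b^*\|}(\mathbf b^* )\,\mathbf b+\boldsymbol\nu(\mathbf b^* ),$$ where $$\boldsymbol\nu(\mathbf b^* )=-\frac{1}{\hat\sigma_{1:k}}\mathbf V_{1:k}^T\mathbf X_{1:k}\check{\boldsymbol\beta}^\lambda_{1:k}(\mathbf b^* ),\qquad \check{\boldsymbol\beta}^\lambda_{1:k}(\mathbf b^* )=\mathbf S^{-1}\mathbf X_{1:k}^T\mathbf P_{-1:k}\big(\mathbf y-\mathbf X_{-1:k}\hat{\boldsymbol\beta}^\lambda_{-1:k}(\mathbf b^* )-\mathbf P_{\mathcal A(\mathbf b^* )}\mathbf X_{1:k}\mathbf b^*\big),$$ $\mathbf S=\mathbf X_{1:k}^T\mathbf V_{1:k}\mathbf V_{1:k}^T\mathbf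 X_{1:k}$, and $\nabla g_{r}(\mathbf b^* )=\frac{1}{\hat\sigma_{1:k}}(\mathbf X_{1:k}^T\mathbf V_{1:k})^{-1}\big[\mathbf X_{1:k}^T(\mathbf I-\mathbf P_{\mathcal A(\mathbf b^* )})\mathbf X_{1:k}+\frac{n\lambda}{r}\mathbf I\big]$.
   Context: For a matrix $\mathbf A$, $\mathbf A_i$ is its $i$-th column, $\mathbf A_{1:i}$ its first $i$ columns and $\mathbf A_{-1:i}$ the submatrix with the first $i$ columns removed. $\mathbf P_{-1:i}$ is the orthogonal projection onto the column space of $\mathbf X_{-1:i}$. $\mathbf V\in\mathbb R^{n\times(n-d+k)}$ has orthonormal columns spanning the orthogonal complement of the column space of $\mathbf X_{-1:k}$, with first $k$ columns $\mathbf V_i=(\mathbf I-\mathbf P_{-1:i})\mathbf X_i/\|(\mathbf I-\mathbf P_{-1:i})\mathbf X_i\|$. $\hat{\mathbf y}_{1:k}=\mathbf P_{-1:k}\mathbf y$. For $\mathbf b\in\mathbb R^k$: $\hat{\boldsymbol\beta}^\lambda_{-1:k}(\mathbf b)=\arg\min_{\boldsymbol\gamma\in\mathbb R^{d-k}}\big(\frac1{2n}\|\mathbf y-\mathbf X_{1:k}\mathbf b-\mathbf X_{-1:k}\boldsymbol\gamma\|_2^2+\lambda\|\boldsymbol\gamma\|_1\big)$ (unique); $\mathcal A(\mathbf b)\subseteq\{k+1,\dots,d\}$ is the set of indices of columns of $\mathbf X$ whose coefficient in $\hat{\boldsymbol\beta}^\lambda_{-1:k}(\mathbf b)$ is nonzero;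 $\mathbf P_{\mathcal A(\mathbf b)}$ is the orthogonal projection onto the span of $\{\mathbf X_i:i\in\mathcal A(\mathbf b)\}$. For $r>0$, $g_r(\mathbf b)=\frac{1}{\hat\sigma_{1:k}}(\mathbf X_{1:k}^T\mathbf V_{1:k})^{-1}\big(-\mathbf X_{1:k}^T(\hat{\mathbf y}_{1:k}-\mathbf X_{1:k}\mathbf b-\mathbf X_{-1:k}\hat{\boldsymbol\beta}^\lambda_{-1:k}(\mathbf b))+n\lambda\,\mathbf b/r\big)$ (the paper's $f^{-1}_{\mathbf S^{(1:k)}}(\mathbf b;r)$). *)

From HB Require Import structures.
From mathcomp Require Import all_boot all_order all_algebra.
From mathcomp Require Import reals.
Set Implicit Arguments. Unset Strict Implicit. Unset Printing Implicit Defensive.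
Import Order.TTheory GRing.Theory Num.Theory.
Local Open Scope ring_scope.

Section Defs.
Variable R : realType.

Definition enorm (p : nat) (v : 'cV[R]_p) : R := Num.sqrt (\sum_i (v i 0) ^+ 2).

Definition l1norm (p : nat) (v : 'cV[R]_p) : R := \sum_i `|v i 0|.

(* Orthogonal projection onto the column space of M, for M of full column
   rank: M (M^T M)^{-1} M^T. *)
Definition proj_mx (n p : nat) (M : 'M[R]_(n, p)) : 'M[R]_n :=
  M *m invmx (M^T *m M) *m M^T.

(* The submatrix of X made of the columns indexed by A (in increasing order). *)
Definition cols (n p : nat) (X : 'M[R]_(n, p)) (A : {set 'I_p}) :
  'M[R]_(n, #|A|) := colsub (@enum_val _ (mem A)) X.

Definition colspan_proj (n p : nat) (X : 'M[R]_(n, p)) (A : {set 'I_p}) : 'M[R]_n :=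
  proj_mx (cols X A).

(* The design matrix X has d = k + m columns; X_{1:k} = lsubmx X,
   X_{-1:k} = rsubmx X. *)

Definition lasso_obj (n k m : nat) (X : 'M[R]_(n, k + m)) (y : 'cV[R]_n)
  (lam : R) (b : 'cV[R]_k) (g : 'cV[R]_m) : R :=
  (2 * n%:R)^-1 * (enorm (y - lsubmx X *m b - rsubmx X *m g)) ^+ 2
  + lam * l1norm g.

(* beta is the (unique) lasso map b |-> hat beta^lambda_{-1:k}(b). *)
Definition is_lasso_map (n k m : nat) (X : 'M[R]_(n, k + m)) (y : 'cV[R]_n)
  (lam : R) (beta : 'cV[R]_k -> 'cV[R]_m) : Prop :=
  forall b g, lasso_obj X y lam b (beta b) <= lasso_obj X y lam b g.

(* Active set A(b), indices relative to the block X_{-1:k}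
   (index j : 'I_m corresponds to column k+1+j of X, 1-based). *)
Definition active (k m : nat) (beta : 'cV[R]_k -> 'cV[R]_m) (b : 'cV[R]_k)
  : {set 'I_m} := [set j | beta b j 0 != 0].

Definition P_rest (n k m : nat) (X : 'M[R]_(n, k + m)) : 'M[R]_n :=
  proj_mx (rsubmx X).

(* P_{-1:i} for the 0-based column index i of X_{1:k}: projection onto the
   span of the columns of X with (0-based) index > i, i.e. X with its first
   i+1 (1-based: first i) columns removed. *)
Definition P_after (n k m : nat) (X : 'M[R]_(n, k + m)) (i : 'I_k) : 'M[R]_n :=
  colspan_proj X [set j : 'I_(k + m) | (i < j)%N].

Definition V1 (n k m : nat) (X : 'M[R]_(n, k + m)) : 'M[R]_(n, k) :=
  \matrix_(r < n, c < k)
    (let w := (1%:M - P_after X c) *m col (lshift m c) X in w r 0 / enorm w).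

Definition sigma_hat (n k m : nat) (X : 'M[R]_(n, k + m)) (y : 'cV[R]_n) : R :=
  enorm ((1%:M - P_rest X) *m y).

Definition g_fun (n k m : nat) (X : 'M[R]_(n, k + m)) (y : 'cV[R]_n) (lam : R)
  (beta : 'cV[R]_k -> 'cV[R]_m) (r : R) (b : 'cV[R]_k) : 'cV[R]_k :=
  (sigma_hat X y)^-1 *: (invmx ((lsubmx X)^T *m V1 X) *m
    (- ((lsubmx X)^T *m (P_rest X *m y - lsubmx X *m b - rsubmx X *m beta b))
     + (n%:R * lam / r) *: b)).

Definition grad_g (n k m : nat) (X : 'M[R]_(n, k + m)) (y : 'cV[R]_n) (lam : R)
  (beta : 'cV[R]_k -> 'cV[R]_m) (r : R) (bs : 'cV[R]_k) : 'M[R]_k :=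
  (sigma_hat X y)^-1 *: (invmx ((lsubmx X)^T *m V1 X) *m
    ((lsubmx X)^T *m (1%:M - colspan_proj (rsubmx X) (active beta bs)) *m lsubmx X
     + (n%:R * lam / r) *: 1%:M)).

Definition S_mx (n k m : nat) (X : 'M[R]_(n, k + m)) : 'M[R]_k :=
  (lsubmx X)^T *m V1 X *m (V1 X)^T *m lsubmx X.

Definition beta_check (n k m : nat) (X : 'M[R]_(n, k + m)) (y : 'cV[R]_n)
  (beta : 'cV[R]_k -> 'cV[R]_m) (bs : 'cV[R]_k) : 'cV[R]_k :=
  invmx (S_mx X) *m (lsubmx X)^T *m P_rest X *m
    (y - rsubmx X *m beta bs
       - colspan_proj (rsubmx X) (active beta bs) *m lsubmx X *m bs).

Definition nu_vec (n k m : nat) (X : 'M[R]_(n, k + m)) (y : 'cV[R]_n)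
  (beta : 'cV[R]_k -> 'cV[R]_m) (bs : 'cV[R]_k) : 'cV[R]_k :=
  - ((sigma_hat X y)^-1 *: ((V1 X)^T *m lsubmx X *m beta_check X y beta bs)).

End Defs.

(* Near bs the active set A is fixed, so the lasso solution is pinned down by
   its KKT equations on the active columns of X_{-1:k}.  Write
   X_{-1:k} W = P_A with W supported on A and move bs to b = bs + d: the vector
   gamma = beta(bs) - W X_{1:k} d only changes the residual by
   (I - P_A) X_{1:k} d, which is orthogonal to the active columns, and for small
   d it keeps the signs of the active coordinates, so gamma still satisfies the
   KKT equations at b; by convexity X_{-1:k} beta(b) = X_{-1:k} gamma.  Hence
   X_{-1:k} beta(b) + P_A X_{1:k} b is constant near bs, which makes g_r affine
   there.  The constant is identified through M = X_{1:k}^T V_{1:k}, which is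
   triangular with nonzero diagonal, and S = M M^T. *)
From Pilot Require Import Defs.
From HB Require Import structures.
From mathcomp Require Import all_boot all_order all_algebra.
From mathcomp Require Import reals.
From mathcomp Require Import ring lra.
Set Implicit Arguments. Unset Strict Implicit. Unset Printing Implicit Defensive.
Import Order.TTheory GRing.Theory Num.Theory.
Local Open Scope ring_scope.

Section RealFacts.
Variable R : realType.

Lemma normrD_sg (x t : R) : `|t| < `|x| -> `|x + t| = Num.sg x * (x + t).
Proof.
case: (ltrgt0P x) => [x0|x0|_]; last by rewrite normr_lt0.
  by rewrite gtr0_sg // mul1r => /ltr_normlP [? ?]; rewrite gtr0_norm //; lra.
by rewrite ltr0_sg // mulN1r => /ltr_normlP [? ?]; rewrite ltr0_norm //; lra.
Qed.

Lemma mulr_sg_le_norm (x t : R) : Num.sg x * t <= `|t|.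
Proof.
by apply: le_trans (ler_norm _) _; rewrite normrM normr_sg ler_piMl // lern1 leq_b1.
Qed.

Lemma ge0_near0_lin_coef_eq0 (a q eps : R) : 0 < eps -> 0 <= q ->
  (forall t, `|t| < eps -> 0 <= a * t + q * t ^+ 2) -> a = 0.
Proof.
move=> eps0 q0 H; apply/eqP/negPn/negP => a0.
have a_gt0 : 0 < `|a| by rewrite normr_gt0.
pose D := 2 * (eps * q + `|a|).
have D0 : 0 < D by rewrite /D; nra.
pose tau := eps * `|a| / D.
have tauD : tau * D = eps * `|a| by rewrite mulfVK // gt_eqF.
have tau0 : 0 < tau by rewrite divr_gt0 // mulr_gt0.
have tau_lt : tau < eps by rewrite -(ltr_pM2r D0) tauD /D; nra.
have := H (- Num.sg a * tau).
rewrite normrM normrN normr_sg a0 mul1r gtr0_norm // => /(_ tau_lt).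
rewrite exprMn sqrrN sqr_sg a0 mul1r mulrA mulrN (mulrC a) -normrEsg => h.
have le_qtau : `|a| <= q * tau by rewrite -(ler_pM2r tau0) -mulrA -expr2; lra.
have : q * tau * D < `|a| * D by rewrite -mulrA tauD /D; nra.
by rewrite ltr_pM2r //; lra.
Qed.

End RealFacts.

Section EuclideanNorm.
Variable R : realType.

Lemma mxE_sub p q (A B : 'M[R]_(p, q)) i j : (A - B) i j = A i j - B i j.
Proof. by rewrite !mxE. Qed.

Lemma mulmx_row_entry p q r (A : 'M[R]_(p, q)) (B : 'M[R]_(q, r)) i j :
  (A *m B) i j = (row i A *m B) 0 j.
Proof. by rewrite -row_mul [RHS]mxE. Qed.

Lemma trmx_mul_self_eq0 p q (V : 'M[R]_(p, q)) : V^T *m V = 0 -> V = 0.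
Proof.
move=> VV0; apply/matrixP => i j; apply/eqP; rewrite mxE -sqrf_eq0.
have /eqP := congr1 (fun M : 'M_q => M j j) VV0.
rewrite !mxE (bigD1 i) //= mxE -expr2 paddr_eq0 ?sqr_ge0 ?sumr_ge0 //.
  by case/andP.
by move=> l _; rewrite mxE -expr2 sqr_ge0.
Qed.

Lemma enorm_sqr p (v : 'cV[R]_p) : enorm v ^+ 2 = (v^T *m v) 0 0.
Proof.
rewrite /enorm sqr_sqrtr ?sumr_ge0 // => [|i _]; last exact: sqr_ge0.
by rewrite mxE; apply: eq_bigr => i _; rewrite mxE expr2.
Qed.

Lemma enorm_ge0 p (v : 'cV[R]_p) : 0 <= enorm v.
Proof. exact: sqrtr_ge0. Qed.

Lemma enorm_eq0 p (v : 'cV[R]_p) : (enorm v == 0) = (v == 0).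
Proof.
apply/eqP/eqP => [v0|->]; last first.
  by rewrite /enorm big1 ?sqrtr0 // => i _; rewrite mxE expr0n.
apply: trmx_mul_self_eq0; rewrite [LHS]mx11_scalar -enorm_sqr v0 expr0n.
by apply/matrixP => i j; rewrite !mxE !ord1.
Qed.

Lemma normr_le_enorm p (v : 'cV[R]_p) i : `|v i 0| <= enorm v.
Proof.
rewrite /enorm -(sqrtr_sqr (v i 0)) ler_sqrt; last first.
  by rewrite sumr_ge0 // => j _; apply: sqr_ge0.
by rewrite (bigD1 i) //= lerDl sumr_ge0 // => j _; apply: sqr_ge0.
Qed.

Lemma enormB_sqr p (u v : 'cV[R]_p) :
  enorm (u - v) ^+ 2 = enorm u ^+ 2 - 2 * (v^T *m u) 0 0 + enorm v ^+ 2.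
Proof.
have uv : (u^T *m v) 0 0 = (v^T *m u) 0 0.
  by rewrite !mxE; apply: eq_bigr => l _; rewrite !mxE mulrC.
rewrite !enorm_sqr.
have -> : (u - v)^T = u^T - v^T by rewrite linearB.
rewrite mulmxBl !mulmxBr; move: uv; set a := u^T *m v; set b := v^T *m u.
by rewrite !mxE => ->; lra.
Qed.

Lemma enormZ_sqr p (v : 'cV[R]_p) (t : R) : enorm (t *: v) ^+ 2 = t ^+ 2 * enorm v ^+ 2.
Proof. by rewrite !enorm_sqr linearZ /= linearZ /= -scalemxAl scalerA mxE -expr2. Qed.

Lemma mulmx_dominated_near0 p q (L : 'M[R]_(p, q)) (g : 'cV[R]_p) :
  exists2 e, 0 < e & forall v, enorm v < e ->
    forall j, g j 0 != 0 -> `|(L *m v) j 0| < `|g j 0|.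
Proof.
pose K := \sum_j \sum_l `|L j l|.
have K0 : 0 <= K by do 2!apply: sumr_ge0 => ? _.
have LK v j : `|(L *m v) j 0| <= K * enorm v.
  apply: le_trans (_ : (\sum_l `|L j l|) * enorm v <= _); last first.
    by rewrite ler_wpM2r ?enorm_ge0 // /K (bigD1 j) //= lerDl; do 2!apply: sumr_ge0 => ? _.
  rewrite mxE mulr_suml; apply: le_trans (ler_norm_sum _ _ _) _.
  by apply: ler_sum => l _; rewrite normrM ler_wpM2l ?normr_le_enorm.
pose mu := \big[Num.min/1]_(j | g j 0 != 0) `|g j 0|.
have mu0 : 0 < mu by apply/bigmin_gtP; split=> // j; rewrite normr_gt0.
have K1 : 0 < K + 1 by rewrite ltr_wpDl.
exists (mu / (K + 1)) => [|v]; first by rewrite divr_gt0.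
rewrite ltr_pdivlMr // => vmu j gj; have : mu <= `|g j 0| by apply: bigmin_le_cond.
by have := LK v j; have := enorm_ge0 v; nra.
Qed.

End EuclideanNorm.

Section Projection.
Variable R : realType.

Lemma row_free_gram_unit n p (C : 'M[R]_(n, p)) : row_free C^T -> C^T *m C \in unitmx.
Proof.
move=> fC; rewrite -row_free_unit; apply: inj_row_free => v vCC.
have : (C *m v^T)^T *m (C *m v^T) = 0.
  by rewrite trmx_mul trmxK !mulmxA -(mulmxA v) vCC mul0mx.
move/trmx_mul_self_eq0/(congr1 trmx); rewrite trmx_mul trmxK trmx0 => /eqP.
by rewrite mulmx_free_eq0 // => /eqP.
Qed.

Lemma proj_mx_mulmx n p (C : 'M[R]_(n, p)) : row_free C^T -> Defs.proj_mx C *m C = C.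
Proof. by move=> fC; rewrite /Defs.proj_mx -!mulmxA mulVmx ?mulmx1 ?row_free_gram_unit. Qed.

Lemma trmx_proj_mx n p (C : 'M[R]_(n, p)) : (Defs.proj_mx C)^T = Defs.proj_mx C.
Proof. by rewrite /Defs.proj_mx !trmx_mul trmxK trmx_inv trmx_mul trmxK mulmxA. Qed.

Lemma proj_mx_compl_gram n p (C : 'M[R]_(n, p)) : row_free C^T ->
  (1%:M - Defs.proj_mx C)^T *m (1%:M - Defs.proj_mx C) = 1%:M - Defs.proj_mx C.
Proof.
move=> fC; have PP : Defs.proj_mx C *m Defs.proj_mx C = Defs.proj_mx C.
  by rewrite [X in _ *m X]/Defs.proj_mx !mulmxA proj_mx_mulmx.
have -> : (1%:M - Defs.proj_mx C)^T = 1%:M - Defs.proj_mx C.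
  by rewrite linearB /= trmx1 trmx_proj_mx.
by rewrite mulmxBr mulmx1 mulmxBl mul1mx PP subrr subr0.
Qed.

Lemma row_free_trmx_colsub n p p' (X : 'M[R]_(n, p)) (f : 'I_p' -> 'I_p) :
  row_free X^T -> injective f -> row_free (colsub f X)^T.
Proof.
move=> fX injf; rewrite -[X in colsub f X]mulmx1 -mulmx_colsub trmx_mul.
rewrite /row_free mxrankMfree // -/(row_free _); apply/row_freeP.
exists (colsub f 1%:M); apply/matrixP => i j; rewrite !mxE.
rewrite (bigD1 (f i)) //= big1 => [|l /negbTE nl]; last by rewrite !mxE nl mul0r.
by rewrite !mxE eqxx mul1r addr0 (inj_eq injf).
Qed.

Lemma row_free_trmx_rsubmx n k m (X : 'M[R]_(n, k + m)) :
  row_free X^T -> row_free (rsubmx X)^T.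
Proof. by move=> fX; rewrite rsubmxEsub row_free_trmx_colsub //; apply: rshift_inj. Qed.

Lemma row_free_trmx_cols n p (X : 'M[R]_(n, p)) (S : {set 'I_p}) :
  row_free X^T -> row_free (cols X S)^T.
Proof. by move=> fX; apply: row_free_trmx_colsub => //; apply: enum_val_inj. Qed.

Lemma colspan_proj_col n p (X : 'M[R]_(n, p)) (S : {set 'I_p}) q :
  row_free X^T -> q \in S -> colspan_proj X S *m col q X = col q X.
Proof.
move=> fX qS; rewrite -(enum_rankK_in qS qS) -col_colsub -/(cols X S).
by rewrite colE mulmxA proj_mx_mulmx ?row_free_trmx_cols.
Qed.

Lemma row_colspan_proj_compl n p (X : 'M[R]_(n, p)) (S : {set 'I_p}) q :
  row_free X^T -> q \in S -> row q (X^T *m (1%:M - colspan_proj X S)) = 0.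
Proof.
move=> fX qS; rewrite row_mul -tr_col mulmxBr mulmx1.
by rewrite /colspan_proj -trmx_proj_mx -trmx_mul -/(colspan_proj X S) colspan_proj_col ?subrr.
Qed.

Lemma colspan_projP n p (X : 'M[R]_(n, p)) (S : {set 'I_p}) :
  exists2 W : 'M_(p, n), X *m W = colspan_proj X S & forall j, j \notin S -> row j W = 0.
Proof.
pose C := cols X S; pose E := colsub (@enum_val _ (mem S)) (1%:M : 'M[R]_p).
exists (E *m (invmx (C^T *m C) *m C^T)).
  by rewrite mulmxA mulmx_colsub mulmx1 /colspan_proj /Defs.proj_mx !mulmxA.
move=> j jS; rewrite row_mul; suff -> : row j E = 0 by rewrite mul0mx.
apply/matrixP => i l; rewrite !mxE.
by case: eqP => // jl; case/negP: jS; rewrite jl enum_valP.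
Qed.

Lemma colspan_proj_compl_col_neq0 n p (X : 'M[R]_(n, p)) (S : {set 'I_p}) q :
  row_free X^T -> q \notin S -> (1%:M - colspan_proj X S) *m col q X != 0.
Proof.
move=> fX qS; have [W XW Wout] := colspan_projP X S.
apply/eqP; rewrite mulmxBl mul1mx => /eqP; rewrite subr_eq0 => /eqP colq.
have : X *m (delta_mx q 0 - W *m col q X) = 0.
  by rewrite mulmxBr -colE mulmxA XW -colq subrr.
move/(congr1 trmx)/eqP; rewrite trmx_mul trmx0 mulmx_free_eq0 // trmx_eq0 subr_eq0.
move=> /eqP/(congr1 (row q))/matrixP/(_ 0 0).
by rewrite row_mul Wout // mul0mx !mxE !eqxx => /eqP; rewrite oner_eq0.
Qed.

Lemma proj_mx_colspan_proj n p (X : 'M[R]_(n, p)) (S : {set 'I_p}) :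
  row_free X^T -> Defs.proj_mx X *m colspan_proj X S = colspan_proj X S.
Proof.
move=> fX; rewrite /colspan_proj [X in _ *m X]/Defs.proj_mx !mulmxA.
by rewrite /cols mulmx_colsub proj_mx_mulmx.
Qed.

End Projection.

Section Orthogonalization.
Variables (R : realType) (n k m : nat) (X : 'M[R]_(n, k + m)).
Hypothesis fX : row_free X^T.

Lemma lsubmx_V1_unit : (lsubmx X)^T *m V1 X \in unitmx.
Proof.
pose w c := (1%:M - P_after X c) *m col (lshift m c) X.
have ME i j : ((lsubmx X)^T *m V1 X) i j
    = ((col (lshift m i) X)^T *m w j) 0 0 / enorm (w j).
  by rewrite !mxE mulr_suml; apply: eq_bigr => r _; rewrite !mxE /= mulrA mxE.
have Mtrig : is_trig_mx ((lsubmx X)^T *m V1 X)^T.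
  apply/is_trig_mxP => i j ij; rewrite mxE ME tr_col -mulmx_row_entry mulmxA.
  by rewrite mulmx_row_entry row_colspan_proj_compl ?mul0mx ?mxE ?mul0r // inE.
rewrite -unitmx_tr unitmxE det_trig // unitfE; apply/prodf_neq0 => c _.
have wc : enorm (w c) != 0.
  by rewrite enorm_eq0 colspan_proj_compl_col_neq0 // inE /= ltnn.
rewrite mxE ME /w /P_after /colspan_proj.
set Q := 1%:M - _; set u := col _ X.
have -> : u^T *m (Q *m u) = (Q *m u)^T *m (Q *m u).
  by rewrite trmx_mul -mulmxA (mulmxA Q^T) proj_mx_compl_gram ?row_free_trmx_cols.
by rewrite -enorm_sqr expr2 mulfK.
Qed.

Lemma trmx_V1_lsubmx_invS :
  (V1 X)^T *m lsubmx X *m invmx (S_mx X) = invmx ((lsubmx X)^T *m V1 X).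
Proof.
set M := (lsubmx X)^T *m V1 X; have uM : M \in unitmx by apply: lsubmx_V1_unit.
have SE : S_mx X = M *m M^T by rewrite /S_mx /M trmx_mul trmxK !mulmxA.
have VM : (V1 X)^T *m lsubmx X = M^T by rewrite /M trmx_mul trmxK.
rewrite VM -[M^T *m _](mulKmx uM) [M *m _]mulmxA -SE mulmxV ?mulmx1 //.
by rewrite SE unitmx_mul uM unitmx_tr.
Qed.

End Orthogonalization.

Section LassoOptimality.
Variables (R : realType) (n k m : nat) (X : 'M[R]_(n, k + m)) (y : 'cV[R]_n).
Variables (lam : R) (b : 'cV[R]_k).
Hypothesis n_gt0 : (0 < n)%N.

Definition lasso_resid (g : 'cV[R]_m) := y - lsubmx X *m b - rsubmx X *m g.

Lemma lasso_obj_shift g d : lasso_obj X y lam b (g + d) =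
  (2 * n%:R)^-1 * (enorm (lasso_resid g) ^+ 2
     - 2 * (d^T *m ((rsubmx X)^T *m lasso_resid g)) 0 0
     + enorm (rsubmx X *m d) ^+ 2) + lam * l1norm (g + d).
Proof.
rewrite /lasso_obj mulmxA -trmx_mul -enormB_sqr; congr (_ * _ ^+ 2 + _).
by rewrite /lasso_resid mulmxDr opprD addrA.
Qed.

Lemma l1norm_shift_coord (g : 'cV[R]_m) (t : R) j :
  l1norm (g + t *: delta_mx j 0) = l1norm g - `|g j 0| + `|g j 0 + t|.
Proof.
rewrite /l1norm (bigD1 j) //= [in RHS](bigD1 j) //= !mxE eqxx mulr1.
under eq_bigr => i /negbTE ij do rewrite !mxE ij mulr0 addr0.
lra.
Qed.

Lemma lasso_stationary (g : 'cV[R]_m) j :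
  (forall h, lasso_obj X y lam b g <= lasso_obj X y lam b h) -> g j 0 != 0 ->
  ((rsubmx X)^T *m lasso_resid g) j 0 = n%:R * lam * Num.sg (g j 0).
Proof.
move=> gmin gj0; set W := (rsubmx X)^T *m lasso_resid g.
have n_pos : (0 : R) < n%:R by rewrite ltr0n.
set U := enorm (rsubmx X *m delta_mx j 0) ^+ 2.
suff : - (n%:R^-1 * W j 0) + lam * Num.sg (g j 0) = 0.
  rewrite -mulrA => /eqP; rewrite addrC subr_eq0 => /eqP ->.
  by rewrite mulrA mulfV ?gt_eqF ?mul1r.
(* Moving g_j by |t| < |g_j| keeps its sign, so the objective changes by
   exactly a t + U t^2 / 2n, with a the left-hand side above. *)
apply: (ge0_near0_lin_coef_eq0 (q := (2 * n%:R)^-1 * U) (eps := `|g j 0|)).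
- by rewrite normr_gt0.
- by rewrite mulr_ge0 ?sqr_ge0 // invr_ge0 mulr_ge0.
move=> t tg; have := gmin (g + t *: delta_mx j 0).
have dW : ((t *: (delta_mx j 0 : 'cV[R]_m))^T *m W) 0 0 = t * W j 0.
  by rewrite linearZ /= -scalemxAl trmx_delta -rowE !mxE.
rewrite lasso_obj_shift dW -scalemxAr enormZ_sqr -/U l1norm_shift_coord normrD_sg //.
rewrite /lasso_obj -/(lasso_resid g) -/W invfM [Num.sg _ * _]mulrDr -normrEsg.
set E := enorm _ ^+ 2; set c := n%:R^-1.
have c2 : (2^-1 : R) * 2 = 1 by rewrite mulVf // pnatr_eq0.
nra.
Qed.

Lemma lasso_fit_unique (h gam : 'cV[R]_m) (s : 'I_m -> R) : 0 <= lam ->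
  (forall g, lasso_obj X y lam b h <= lasso_obj X y lam b g) ->
  (forall j, ((rsubmx X)^T *m lasso_resid gam) j 0 * (h - gam) j 0
             = n%:R * lam * s j * (h - gam) j 0) ->
  (forall j, s j * (h - gam) j 0 <= `|h j 0| - `|gam j 0|) ->
  rsubmx X *m h = rsubmx X *m gam.
Proof.
move=> lam0 hmin subgrad sj; set d := h - gam.
have n_pos : (0 : R) < n%:R by rewrite ltr0n.
have dotd : (d^T *m ((rsubmx X)^T *m lasso_resid gam)) 0 0
    = n%:R * lam * \sum_j s j * d j 0.
  by rewrite mxE mulr_sumr; apply: eq_bigr => j _; rewrite mxE mulrC subgrad; ring.
have l1d : lam * \sum_j s j * d j 0 <= lam * (l1norm h - l1norm gam).
  by rewrite ler_wpM2l // /l1norm -sumrB ler_sum.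
have hd : gam + d = h by rewrite addrC subrK.
have := hmin gam; rewrite -[X in lasso_obj _ _ _ _ X <= _]hd lasso_obj_shift hd dotd.
rewrite /lasso_obj -/(lasso_resid gam).
set E := enorm _ ^+ 2; set F := enorm (rsubmx X *m _) ^+ 2.
have c2 : (2 * n%:R)^-1 * (2 * (n%:R * lam * \sum_j s j * d j 0))
    = lam * \sum_j s j * d j 0 by field; rewrite gt_eqF.
move=> ineq; have F0 : (2 * n%:R)^-1 * F <= 0 by nra.
apply/eqP; rewrite -subr_eq0 -mulmxBr -enorm_eq0 -sqrf_eq0 eq_le sqr_ge0 andbT.
by rewrite -(pmulr_rle0 _ (_ : 0 < (2 * n%:R)^-1)) // invr_gt0 mulr_gt0.
Qed.

End LassoOptimality.

Section LocalAffinity.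
Variables (R : realType) (n k m : nat) (X : 'M[R]_(n, k + m)) (y : 'cV[R]_n).
Variables (lam : R) (beta : 'cV[R]_k -> 'cV[R]_m) (bs : 'cV[R]_k).

Lemma lasso_fit_locally_affine :
  (0 < n)%N -> row_free (rsubmx X)^T -> 0 <= lam -> is_lasso_map X y lam beta ->
  (exists2 e : R, 0 < e &
     forall b, enorm (b - bs) < e -> active beta b = active beta bs) ->
  exists2 e : R, 0 < e & forall b, enorm (b - bs) < e ->
   rsubmx X *m beta b + colspan_proj (rsubmx X) (active beta bs) *m lsubmx X *m b
   = rsubmx X *m beta bs + colspan_proj (rsubmx X) (active beta bs) *m lsubmx X *m bs.
Proof.
move=> n_gt0 fX2 lam0 betamin [e0 e0_gt0 activeE].
set A := active beta bs; set X1 := lsubmx X; set X2 := rsubmx X.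
set PA := colspan_proj X2 A; set bst := beta bs.
have [W X2W Wout] := colspan_projP X2 A.
pose L := W *m X1.
have [e1 e1_gt0 L_small] := mulmx_dominated_near0 L bst.
exists (Num.min e0 e1); first by rewrite lt_min e0_gt0 e1_gt0.
move=> b; rewrite lt_min => /andP[/activeE activeb /L_small{}L_small].
have off_b j : j \notin A -> beta b j 0 = 0 by rewrite /A -activeb inE negbK => /eqP.
have off_bs j : j \notin A -> bst j 0 = 0 by rewrite inE negbK => /eqP.
have off_L j : j \notin A -> (L *m (b - bs)) j 0 = 0.
  by move=> jA; rewrite mulmx_row_entry row_mul Wout // !mul0mx mxE.
pose gam := bst - L *m (b - bs).
have X2gam : X2 *m gam = X2 *m bst - PA *m X1 *m (b - bs).
  by rewrite mulmxBr /L !mulmxA X2W.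
have off_gam j : j \notin A -> gam j 0 = 0.
  by move=> jA; rewrite mxE_sub off_bs // off_L // subr0.
suff : X2 *m beta b = X2 *m gam.
  by rewrite X2gam => ->; rewrite !mulmxBr opprB addrA subrK.
have resid_gam : lasso_resid X y b gam
    = lasso_resid X y bs bst - (1%:M - PA) *m (X1 *m (b - bs)).
  rewrite /lasso_resid -/X1 -/X2 X2gam mulmxBl mul1mx !mulmxBr !mulmxA.
  set u := X1 *m b; set v := X1 *m bs; set w := X2 *m bst.
  set pu := PA *m X1 *m b; set pv := PA *m X1 *m bs.
  by apply/matrixP => i c; rewrite !mxE; lra.
apply: (lasso_fit_unique n_gt0 (s := fun j => Num.sg (bst j 0)) lam0 (betamin b)) => j.
  have [jA|jA] := boolP (j \in A); last by rewrite mxE_sub off_b // off_gam // subrr !mulr0.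
  rewrite resid_gam mulmxBr (mxE_sub (_ *m lasso_resid _ _ _ _)).
  rewrite [_ *m (_ *m (X1 *m _))]mulmxA (mulmx_row_entry (_ *m (1%:M - PA))).
  rewrite /PA row_colspan_proj_compl // mul0mx [in X in _ - X]mxE subr0.
  by rewrite (lasso_stationary n_gt0 (betamin bs)) //; rewrite inE in jA.
have [jA|jA] := boolP (j \in A); last first.
  by rewrite mxE_sub off_b // off_gam // subrr mulr0 normr0 subrr.
have bj : bst j 0 != 0 by rewrite inE in jA.
have gam_sg : `|gam j 0| = Num.sg (bst j 0) * gam j 0.
  by rewrite /gam mxE_sub normrD_sg // normrN L_small.
rewrite gam_sg mxE_sub mulrBr.
by have := mulr_sg_le_norm (bst j 0) (beta b j 0); lra.
Qed.

Lemma g_fun_affine_of_fit r b : row_free X^T ->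
  rsubmx X *m beta b + colspan_proj (rsubmx X) (active beta bs) *m lsubmx X *m b
   = rsubmx X *m beta bs + colspan_proj (rsubmx X) (active beta bs) *m lsubmx X *m bs ->
  g_fun X y lam beta r b = grad_g X y lam beta r bs *m b + nu_vec X y beta bs.
Proof.
move=> fX; have fX2 := row_free_trmx_rsubmx fX.
have P2X2 := proj_mx_mulmx fX2.
have P2PA := proj_mx_colspan_proj (active beta bs) fX2.
rewrite -/(P_rest X) in P2X2 P2PA.
rewrite /g_fun /grad_g /nu_vec /beta_check.
move: (P_rest X) (colspan_proj _ _) P2X2 P2PA => P2 PA P2X2 P2PA fit.
rewrite !mulmxA trmx_V1_lsubmx_invS //.
move: (invmx _) (sigma_hat X y)^-1 => Mi si.
set X1 := lsubmx X in fit *; set X2 := rsubmx X in fit P2X2 *.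
have resid : P2 *m y - X1 *m b - X2 *m beta b
    = P2 *m (y - X2 *m beta bs - PA *m X1 *m bs) - (1%:M - PA) *m X1 *m b.
  move/(congr1 (fun v => v - PA *m X1 *m b)): fit; rewrite addrK => ->.
  rewrite !mulmxBr !mulmxA P2X2 P2PA !mulmxBl mul1mx.
  set u := X1 *m b; set v := PA *m X1 *m b; set w := X2 *m beta bs.
  set z := PA *m X1 *m bs.
  by apply/matrixP => i c; rewrite !mxE; lra.
rewrite resid -scalemxAl -scalerBr; congr (_ *: _).
rewrite -!mulmxA -mulmxBr; congr (Mi *m _).
rewrite [(_ + _) *m b]mulmxDl -scalemxAl mul1mx -!mulmxA mulmxBr opprB.
by rewrite addrAC.
Qed.

End LocalAffinity.

Theorem corollary2p2 (R : realType) (n k m : nat)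
  (X : 'M[R]_(n, k + m)) (y : 'cV[R]_n) (lam : R)
  (beta : 'cV[R]_k -> 'cV[R]_m) (bs : 'cV[R]_k) :
  (k + m <= n)%N ->
  \rank X = (k + m)%N ->
  (0 < k)%N -> (0 < m)%N ->
  0 < sigma_hat X y ->
  0 < lam ->
  is_lasso_map X y lam beta ->
  bs != 0 ->
  (exists2 e : R, 0 < e &
     forall b : 'cV[R]_k, enorm (b - bs) < e -> active beta b = active beta bs) ->
  exists2 e : R, 0 < e &
    forall b : 'cV[R]_k, enorm (b - bs) < e -> enorm b = enorm bs ->
      g_fun X y lam beta (enorm bs) b
      = grad_g X y lam beta (enorm bs) bs *m b + nu_vec X y beta bs.
Proof.
(* The identity holds on the whole neighbourhood, not only on the sphere
   ||b|| = ||bs||. *)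
move=> le_dn rankX k_gt0 _ _ lam_gt0 betamin _ activeE.
have fX : row_free X^T by rewrite /row_free mxrank_tr rankX.
have n_gt0 : (0 < n)%N by apply: leq_trans le_dn; rewrite addn_gt0 k_gt0.
have [e e_gt0 fitE] := lasso_fit_locally_affine n_gt0 (row_free_trmx_rsubmx fX)
  (ltW lam_gt0) betamin activeE.
by exists e => // b /fitE fit _; apply: g_fun_affine_of_fit.
Qed.
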